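(* Let $n \geq 2$, $Q \geq 1$, $0<\mu_0 \leq (4\pi)^{-n}$ and $0<c_4<1$. Then the set \[ \bigcup_{\substack{4\mu_0 Q \leq q \leq 4Q \\ q \equiv 0 \ (\mathrm{mod}\ 4)}} \ \bigcup_{\substack{2 \leq a_2,\ldots,a_n \leq 2q \\ a_j \equiv 0\ (\mathrm{mod}\ 2)}} \Big\{ y' = (y_2,\ldots,y_n) \in [0,2\pi]^{n-1} : \Big| y_j - \frac{2\pi a_j}{q} \Big| < \frac{\pi c_4}{(\mu_0 Q)\, Q^{1/(n-1)}},\ j=2,\ldots,n \Big\} \] (the unions over integers $q$ and integer tuples $(a_2,\dots,a_n)$) has Lebesgue measure at least $c_4^{\,n-1} 3^{-(n-1)} 2^{-n}$. *)

From Stdlib Require Import Reals Lra.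
Open Scope R_scope.

Fixpoint prodR (f : nat -> R) (lo cnt : nat) : R :=
  match cnt with
  | O => 1
  | S c => f lo * prodR f (S lo) c
  end.

(* Points of R^{n-1} are represented by y : nat -> R, using only the
   coordinates y 2, ..., y n (as in the paper's y' = (y_2,...,y_n)). *)

Definition in_box (n : nat) (lo hi : nat -> R) (y : nat -> R) : Prop :=
  forall j, (2 <= j <= n)%nat -> lo j <= y j <= hi j.

Definition box_vol (n : nat) (lo hi : nat -> R) : R :=
  prodR (fun j => Rmax 0 (hi j - lo j)) 2 (n - 1).

(* Lebesgue outer measure of S ⊆ R^{n-1} is >= m: every countable cover of S
   by boxes has total volume >= m (covers with divergent volume sum are
   vacuously fine). *)
Definition lebesgue_outer_measure_ge (n : nat) (S : (nat -> R) -> Prop) (m : R)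
  : Prop :=
  forall (lo hi : nat -> nat -> R) (s : R),
    (forall y, S y -> exists k, in_box n (lo k) (hi k) y) ->
    infinite_sum (fun k => box_vol n (lo k) (hi k)) s ->
    m <= s.

Definition approx_set (n : nat) (Q mu0 c4 : R) (y : nat -> R) : Prop :=
  (forall j, (2 <= j <= n)%nat -> 0 <= y j <= 2 * PI) /\
  exists (q : nat) (a : nat -> nat),
    4 * mu0 * Q <= INR q /\ INR q <= 4 * Q /\ Nat.modulo q 4 = 0%nat /\
    forall j, (2 <= j <= n)%nat ->
      (2 <= a j <= 2 * q)%nat /\ Nat.modulo (a j) 2 = 0%nat /\
      Rabs (y j - 2 * PI * INR (a j) / INR q)
        < PI * c4 / ((mu0 * Q) * Rpower Q (/ INR (n - 1))).

From Stdlib Require Import Reals Lra Lia ZArith List.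
From Stdlib Require Import Classical ClassicalEpsilon FunctionalExtensionality.
Open Scope R_scope.

(* Writing [q = 4 m] and [a_j = 2 b_j], the set contains every box of half-width
   [r = pi c4 / (mu0 Q T)], [T = Q^(1/(n-1))], centred at a point [pi (b_2, ..., b_n) / m]
   with [mu0 Q <= m <= Q] and [1 <= b_j <= 4 m], as long as the box stays inside
   [[0, 2 pi]^(n-1)].  Pairwise disjoint boxes have outer measure at least their total
   volume (by bisection: a countable cover that misses some of their volume misses some of
   it on smaller and smaller boxes, which shrink to a point where this is impossible), so
   it suffices to find many such centres, pairwise more than [2 h] apart in some coordinate,
   for some [h < r].  If [r > pi] a single centre does.  Otherwise a grid of mesh comparable to
   [rho = r / c4] is moved to nearby centres: if [mu0 T <= 3] by rounding to the
   denominator [floor Q]; if [mu0 T > 3] by Dirichlet's simultaneous approximation with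
   [K = floor T], which gives denominators [m <= K^(n-1) <= Q].  The grid points whose
   Dirichlet denominator is below [mu0 Q] are then at most half of the grid: for each such
   [m] the fractions of denominator [m] are sparse along every coordinate, and a union
   bound over [m] costs a factor [mu0 11^(n-1)], which [mu0 <= (4 pi)^(-n)] makes small. *)

(** * Finite sums, products and counting *)

Fixpoint sumR (f : nat -> R) (N : nat) : R :=
  match N with O => 0 | S k => sumR f k + f k end.

Lemma sumR_ext f g N : (forall k, (k < N)%nat -> f k = g k) -> sumR f N = sumR g N.
Proof.
induction N as [|N IH]; intros H; simpl; auto.
rewrite IH, H; auto; intros; apply H; lia.
Qed.

Lemma sumR_le f g N : (forall k, (k < N)%nat -> f k <= g k) -> sumR f N <= sumR g N.
Proof.
induction N as [|N IH]; intros H; simpl; [lra|].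
apply Rplus_le_compat; [apply IH; intros; apply H; lia | apply H; lia].
Qed.

Lemma sumR_const c N : sumR (fun _ => c) N = INR N * c.
Proof. induction N as [|N IH]; simpl sumR; [simpl; lra|]. rewrite IH, S_INR; lra. Qed.

Lemma sumR_zero f N : (forall k, (k < N)%nat -> f k = 0) -> sumR f N = 0.
Proof. intros H. rewrite (sumR_ext _ (fun _ => 0)), sumR_const; [lra | auto]. Qed.

Lemma sumR_nonneg f N : (forall k, (k < N)%nat -> 0 <= f k) -> 0 <= sumR f N.
Proof. intros H. rewrite <- (sumR_zero (fun _ => 0) N) by auto. now apply sumR_le. Qed.

Lemma sumR_plus f g N : sumR (fun k => f k + g k) N = sumR f N + sumR g N.
Proof. induction N as [|N IH]; simpl; [lra|]. rewrite IH; lra. Qed.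

Lemma sumR_scal c f N : sumR (fun k => c * f k) N = c * sumR f N.
Proof. induction N as [|N IH]; simpl; [lra|]. rewrite IH; lra. Qed.

Lemma sumR_mono f N M : (forall k, 0 <= f k) -> (N <= M)%nat -> sumR f N <= sumR f M.
Proof. intros H HNM. induction HNM; simpl; [lra|]. specialize (H m). lra. Qed.

Lemma sumR_ge_term f N k : (forall i, 0 <= f i) -> (k < N)%nat -> f k <= sumR f N.
Proof.
intros H Hk. apply Rle_trans with (sumR f (S k)).
- simpl. assert (0 <= sumR f k) by (apply sumR_nonneg; auto). lra.
- apply sumR_mono; auto.
Qed.

Lemma sumR_single f N i0 : (i0 < N)%nat ->
  (forall i, (i < N)%nat -> i <> i0 -> f i = 0) -> sumR f N = f i0.
Proof.
induction N as [|N IH]; intros Hi H; [lia|]. simpl.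
destruct (Nat.eq_dec i0 N) as [->|Hne].
- rewrite sumR_zero; [lra|]. intros; apply H; lia.
- rewrite IH, (H N); try lra; try lia; auto.
Qed.

Lemma sumR_geom e N : sumR (fun k => e / 2 ^ S k) N = e - e / 2 ^ N.
Proof.
induction N as [|N IH]; [simpl; field|].
cbn [sumR]. rewrite IH. simpl. field. apply pow_nonzero; lra.
Qed.

Lemma sumR_app g a b : sumR g (a + b) = sumR g a + sumR (fun k => g (a + k)%nat) b.
Proof.
induction b as [|b IH]; [rewrite Nat.add_0_r; simpl; lra|].
rewrite Nat.add_succ_r. simpl. rewrite IH. lra.
Qed.

Lemma sumR_block g L M :
  sumR g (L * M) = sumR (fun w => sumR (fun v => g (v + L * w)%nat) L) M.
Proof.
induction M as [|M IH]; [rewrite Nat.mul_0_r; reflexivity|].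
rewrite Nat.mul_succ_r, sumR_app, IH. simpl. f_equal.
apply sumR_ext. intros; f_equal; lia.
Qed.

Lemma sumR_swap (g : nat -> nat -> R) A B :
  sumR (fun a => sumR (fun b => g a b) B) A = sumR (fun b => sumR (fun a => g a b) A) B.
Proof.
induction A as [|A IH]; simpl; [rewrite sumR_zero; auto|].
rewrite IH, <- sumR_plus. reflexivity.
Qed.

Lemma infinite_sum_ge_partial f s : infinite_sum f s -> (forall k, 0 <= f k) ->
  forall K, sumR f K <= s.
Proof.
intros Hs Hf K. apply Rnot_lt_le; intro Hlt.
destruct (Hs (sumR f K - s)) as [N0 HN]; [lra|].
specialize (HN (max N0 K) ltac:(lia)).
assert (E : forall k, sum_f_R0 f k = sumR f (S k)).
{ induction k as [|k IH]; simpl; [lra|]. rewrite IH. reflexivity. }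
assert (sumR f K <= sumR f (S (max N0 K))) by (apply sumR_mono; auto; lia).
unfold Rdist in HN. rewrite E, Rabs_right in HN; lra.
Qed.

Lemma prodR_ext f g lo c : (forall j, (lo <= j < lo + c)%nat -> f j = g j) ->
  prodR f lo c = prodR g lo c.
Proof.
revert lo; induction c as [|c IH]; simpl; intros lo H; auto.
rewrite H, (IH (S lo)); auto; try lia. intros; apply H; lia.
Qed.

Lemma prodR_nonneg f lo c : (forall j, (lo <= j < lo + c)%nat -> 0 <= f j) ->
  0 <= prodR f lo c.
Proof.
revert lo; induction c as [|c IH]; simpl; intros lo H; [lra|].
apply Rmult_le_pos; [apply H; lia | apply IH; intros; apply H; lia].
Qed.

Lemma prodR_le f g lo c : (forall j, (lo <= j < lo + c)%nat -> 0 <= f j <= g j) ->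
  prodR f lo c <= prodR g lo c.
Proof.
revert lo; induction c as [|c IH]; simpl; intros lo H; [lra|].
apply Rmult_le_compat; try (apply H; lia).
- apply prodR_nonneg; intros; apply H; lia.
- apply IH; intros; apply H; lia.
Qed.

Lemma prodR_zero f lo c j0 : (lo <= j0 < lo + c)%nat -> f j0 = 0 -> prodR f lo c = 0.
Proof.
revert lo; induction c as [|c IH]; simpl; intros lo H H0; [lia|].
destruct (Nat.eq_dec j0 lo) as [->|]; [rewrite H0; lra|].
rewrite (IH (S lo)); [lra|lia|auto].
Qed.

Lemma prodR_const c0 lo c : prodR (fun _ => c0) lo c = c0 ^ c.
Proof. revert lo; induction c as [|c IH]; simpl; intros; auto. rewrite IH; auto. Qed.

Lemma prodR_shift g lo c : prodR g (S lo) c = prodR (fun t => g (S t)) lo c.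
Proof. revert lo; induction c as [|c IH]; simpl; intros; auto. rewrite IH; auto. Qed.

Lemma prodR_split f g h lo c j0 : (lo <= j0 < lo + c)%nat -> f j0 = g j0 + h j0 ->
  (forall j, j <> j0 -> f j = g j /\ f j = h j) ->
  prodR f lo c = prodR g lo c + prodR h lo c.
Proof.
intros Hj H0 H.
assert (E : forall lo', (lo' > j0)%nat -> forall c',
  prodR f lo' c' = prodR g lo' c' /\ prodR f lo' c' = prodR h lo' c').
{ intros lo' Hl c'. split; apply prodR_ext; intros; apply H; lia. }
revert lo Hj; induction c as [|c IH]; simpl; intros lo Hj; [lia|].
destruct (Nat.eq_dec j0 lo) as [->|Hne].
- rewrite H0. destruct (E (S lo) ltac:(lia) c) as [E1 E2]. rewrite <- E1, <- E2. lra.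
- rewrite (IH (S lo)) by lia. destruct (H lo) as [E1 E2]; auto. rewrite <- E1, <- E2. lra.
Qed.

Lemma INR_ge1 m : (1 <= m)%nat -> 1 <= INR m.
Proof. intros; change 1 with (INR 1); apply le_INR; auto. Qed.

Lemma INR_dist_ge1 a b : a <> b -> 1 <= Rabs (INR a - INR b).
Proof.
intros H. destruct (Nat.lt_ge_cases a b) as [Hl|Hl].
- assert (INR (S a) <= INR b) by (apply le_INR; lia). rewrite S_INR in *.
  rewrite Rabs_left by lra. lra.
- assert (INR (S b) <= INR a) by (apply le_INR; lia). rewrite S_INR in *.
  rewrite Rabs_right by lra. lra.
Qed.

Definition digit (L t i : nat) : nat := ((i / L ^ t) mod L)%nat.

Fixpoint undigits (L d : nat) (a : nat -> nat) : nat :=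
  match d with O => O | S d' => (a O + L * undigits L d' (fun t => a (S t)))%nat end.

Lemma undigits_lt L d a : (forall t, (t < d)%nat -> (a t < L)%nat) -> (undigits L d a < L ^ d)%nat.
Proof.
revert a; induction d as [|d IH]; intros a H; simpl; [lia|].
specialize (IH (fun t => a (S t)) ltac:(intros; apply H; lia)).
specialize (H 0%nat ltac:(lia)). nia.
Qed.

Lemma digit_lt L t i : (0 < L)%nat -> (digit L t i < L)%nat.
Proof. intros; unfold digit; apply Nat.mod_upper_bound; lia. Qed.

Lemma digit_0 L v w : (v < L)%nat -> digit L 0 (v + L * w) = v.
Proof.
intros Hv. unfold digit. rewrite Nat.pow_0_r, Nat.div_1_r, Nat.mul_comm, Nat.Div0.mod_add.
apply Nat.mod_small; auto.
Qed.

Lemma digit_S L t v w : (v < L)%nat -> digit L (S t) (v + L * w) = digit L t w.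
Proof.
intros Hv. unfold digit. rewrite Nat.pow_succ_r', <- Nat.Div0.div_div.
rewrite (Nat.mul_comm L w), Nat.div_add, (Nat.div_small v L) by lia. reflexivity.
Qed.

Lemma digit_undigits L d a t : (forall s, (s < d)%nat -> (a s < L)%nat) -> (t < d)%nat ->
  digit L t (undigits L d a) = a t.
Proof.
revert a t; induction d as [|d IH]; intros a t H Ht; [lia|]. cbn [undigits].
destruct t as [|t].
- apply digit_0, H; lia.
- rewrite digit_S by (apply H; lia). apply (IH (fun s => a (S s))); [intros; apply H|]; lia.
Qed.

Lemma digits_inj L d i i' : (0 < L)%nat -> (i < L ^ d)%nat -> (i' < L ^ d)%nat ->
  (forall t, (t < d)%nat -> digit L t i = digit L t i') -> i = i'.
Proof.
intros HL. revert i i'; induction d as [|d IH]; intros i i' Hi Hi' H; [simpl in *; lia|].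
assert (E0 := H 0%nat ltac:(lia)). unfold digit in E0. rewrite Nat.pow_0_r, !Nat.div_1_r in E0.
assert (Ed : (i / L = i' / L)%nat).
{ simpl in Hi, Hi'. apply IH; try (apply Nat.Div0.div_lt_upper_bound; lia).
  intros t Ht. specialize (H (S t) ltac:(lia)). unfold digit in *.
  rewrite Nat.pow_succ_r', <- !Nat.Div0.div_div in H. auto. }
rewrite (Nat.div_mod i L), (Nat.div_mod i' L), Ed, E0 by lia. reflexivity.
Qed.

Lemma digits_differ L d i i' : (0 < L)%nat -> (i < L ^ d)%nat -> (i' < L ^ d)%nat -> i <> i' ->
  exists t, (t < d)%nat /\ digit L t i <> digit L t i'.
Proof.
intros HL Hi Hi' Hne. apply NNPP; intro Hc. apply Hne, (digits_inj L d); auto.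
intros t Ht. apply NNPP; intro Hc2. apply Hc. exists t; auto.
Qed.

Lemma sumR_prod_digits f L d : (0 < L)%nat ->
  sumR (fun i => prodR (fun t => f (digit L t i)) 0 d) (L ^ d) = (sumR f L) ^ d.
Proof.
intros HL. induction d as [|d IH]; [simpl; lra|].
simpl (L ^ S d)%nat. rewrite sumR_block.
rewrite (sumR_ext _ (fun w => sumR f L * prodR (fun t => f (digit L t w)) 0 d)).
- rewrite sumR_scal, IH. simpl. lra.
- intros w Hw. rewrite Rmult_comm, <- sumR_scal. apply sumR_ext. intros v Hv.
  simpl. rewrite digit_0, prodR_shift, Rmult_comm by auto. f_equal.
  apply prodR_ext. intros t Ht. rewrite digit_S; auto.
Qed.

Lemma pigeonhole M (f : nat -> nat) : (forall i, (i <= M)%nat -> (f i < M)%nat) ->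
  exists i j, (i < j <= M)%nat /\ f i = f j.
Proof.
revert f; induction M as [|M IH]; intros f H; [specialize (H 0%nat ltac:(lia)); lia|].
destruct (classic (exists i, (i <= M)%nat /\ f i = f (S M))) as [[i [Hi E]]|Hno].
{ exists i, (S M). split; [lia|auto]. }
assert (Hne : forall i, (i <= M)%nat -> f i <> f (S M)) by (intros i Hi E; apply Hno; eauto).
(* remove the value [f (S M)] from the range of [f] on [0..M] *)
set (g := fun i => if Nat.ltb (f i) (f (S M)) then f i else (f i - 1)%nat).
destruct (IH g) as [i [j [Hij E]]].
- intros i Hi. unfold g. pose proof (Hne i Hi). pose proof (H i ltac:(lia)).
  pose proof (H (S M) ltac:(lia)). destruct (Nat.ltb_spec (f i) (f (S M))); lia.
- exists i, j. split; [lia|]. unfold g in E.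
  pose proof (Hne i ltac:(lia)). pose proof (Hne j ltac:(lia)).
  destruct (Nat.ltb_spec (f i) (f (S M))), (Nat.ltb_spec (f j) (f (S M))); lia.
Qed.

Definition indic (P : Prop) : R := if excluded_middle_informative P then 1 else 0.

Lemma indic_01 P : 0 <= indic P <= 1.
Proof. unfold indic; destruct excluded_middle_informative; lra. Qed.
Lemma indic_true (P : Prop) : P -> indic P = 1.
Proof. unfold indic; destruct excluded_middle_informative; tauto. Qed.
Lemma indic_false (P : Prop) : ~ P -> indic P = 0.
Proof. unfold indic; destruct excluded_middle_informative; tauto. Qed.
Lemma indic_mono (P P' : Prop) : (P -> P') -> indic P <= indic P'.
Proof. intros H; unfold indic; do 2 destruct excluded_middle_informative; try lra; tauto. Qed.
Lemma indic_compl P : indic P + indic (~ P) = 1.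
Proof. unfold indic; do 2 destruct excluded_middle_informative; tauto || lra. Qed.

Lemma count_nat_interval lo hi L :
  sumR (fun v => indic (lo <= v < hi)%nat) L = INR (Nat.min L hi - lo).
Proof.
induction L as [|L IH]; [reflexivity|]. cbn [sumR]. rewrite IH.
destruct (classic (lo <= L < hi)%nat).
- rewrite indic_true by auto. replace (Nat.min (S L) hi - lo)%nat with (S (Nat.min L hi - lo)) by lia.
  rewrite S_INR; lra.
- rewrite indic_false by auto. replace (Nat.min (S L) hi - lo)%nat with (Nat.min L hi - lo)%nat by lia.
  lra.
Qed.

Lemma up_le_of_lt (A : R) (b : Z) : A < IZR b -> (up A <= b)%Z.
Proof.
intros H. destruct (archimed A).
assert (up A - 1 < b)%Z by (apply lt_IZR; rewrite minus_IZR; simpl; lra). lia.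
Qed.

Lemma lt_up_of_lt (B : R) (b : Z) : IZR b < B -> (b < up B)%Z.
Proof. intros H. destruct (archimed B). apply lt_IZR. lra. Qed.

Lemma count_nat_open_interval (al be : R) L :
  sumR (fun v => indic (al < INR v < be)) L <= Rmax 0 (be - al + 1).
Proof.
set (lo := Z.to_nat (up al)). set (hi := Z.to_nat (up be)).
apply Rle_trans with (sumR (fun v => indic (lo <= v < hi)%nat) L).
{ apply sumR_le. intros v _. apply indic_mono. intros [H1 H2]. rewrite INR_IZR_INZ in H1, H2.
  apply up_le_of_lt in H1. apply lt_up_of_lt in H2. unfold lo, hi. lia. }
rewrite count_nat_interval. destruct (archimed al), (archimed be).
destruct (Nat.le_gt_cases (Nat.min L hi) lo).
- replace (Nat.min L hi - lo)%nat with 0%nat by lia. simpl. unfold Rmax; destruct Rle_dec; lra.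
- assert (INR (Nat.min L hi - lo) <= INR hi - INR lo).
  { rewrite minus_INR by lia. assert (INR (Nat.min L hi) <= INR hi) by (apply le_INR; lia). lra. }
  assert (INR hi = IZR (up be)) by (unfold hi; rewrite INR_IZR_INZ, Z2Nat.id; auto; lia).
  assert (IZR (up al) <= INR lo).
  { unfold lo. destruct (Z.le_gt_cases 0 (up al)).
    - rewrite INR_IZR_INZ, Z2Nat.id; auto; lra.
    - replace (Z.to_nat (up al)) with 0%nat by lia. simpl. apply IZR_le. lia. }
  unfold Rmax; destruct Rle_dec; lra.
Qed.

Lemma count_integers_between (A B : R) : A < B -> INR (Z.to_nat (up B - up A)) <= B - A + 1.
Proof.
intros H. destruct (archimed A), (archimed B).
destruct (Z.le_gt_cases (up B - up A) 0).
- replace (Z.to_nat (up B - up A)) with 0%nat by lia. simpl. lra.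
- rewrite INR_IZR_INZ, Z2Nat.id, minus_IZR by lia. lra.
Qed.

Lemma count_progression_near_point (x0 D w z : R) L : 0 < D -> 0 <= w ->
  sumR (fun v => indic (Rabs (x0 + INR v * D - z) < w)) L <= 2 * w / D + 1.
Proof.
intros HD Hw.
apply Rle_trans with (sumR (fun v => indic ((z - w - x0) / D < INR v < (z + w - x0) / D)) L).
- apply sumR_le. intros v _. apply indic_mono. intros Habs. apply Rabs_def2 in Habs.
  split; apply Rmult_lt_reg_r with D; auto; unfold Rdiv; rewrite Rmult_assoc, Rinv_l; lra.
- eapply Rle_trans; [apply count_nat_open_interval|].
  replace ((z + w - x0) / D - (z - w - x0) / D + 1) with (2 * w / D + 1) by (field; lra).
  assert (0 <= 2 * w / D) by (apply Rmult_le_pos; [lra | left; apply Rinv_0_lt_compat; lra]).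
  apply Rmax_lub; lra.
Qed.

(* Only the integers [b] with [pi b / m] in [(al - w, be + w)] can occur, and each of them
   is close to at most [2 w / D + 1] terms of the progression. *)
Lemma count_progression_near_fractions (x0 D w al be : R) (m L : nat) :
  (1 <= m)%nat -> 0 < D -> 0 < w -> al <= be ->
  (forall v, (v < L)%nat -> al <= x0 + INR v * D <= be) ->
  sumR (fun v => indic (exists b : Z, Rabs (x0 + INR v * D - PI * IZR b / INR m) < w)) L
  <= (INR m * (be - al + 2 * w) / PI + 1) * (2 * w / D + 1).
Proof.
intros Hm HD Hw Hab Hx. pose proof PI_RGT_0. pose proof (INR_ge1 m Hm).
assert (Hpm : 0 < PI / INR m) by (apply Rdiv_lt_0_compat; lra).
set (A := INR m * (al - w) / PI). set (B := INR m * (be + w) / PI).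
assert (HAB : A < B) by (unfold A, B, Rdiv; apply Rmult_lt_compat_r; [apply Rinv_0_lt_compat|]; nra).
set (nb := Z.to_nat (up B - up A)).
set (near_b := fun v t => indic (Rabs (x0 + INR v * D - PI * IZR (up A + Z.of_nat t) / INR m) < w)).
apply Rle_trans with (sumR (fun v => sumR (near_b v) nb) L).
- apply sumR_le. intros v Hv.
  destruct (classic (exists b : Z, Rabs (x0 + INR v * D - PI * IZR b / INR m) < w))
    as [[b Hb]|Hno]; [|rewrite indic_false by auto; apply sumR_nonneg; intros; apply indic_01].
  rewrite indic_true by eauto. specialize (Hx v Hv). apply Rabs_def2 in Hb.
  assert (Hb' : A < IZR b < B).
  { unfold A, B. split; apply Rmult_lt_reg_r with (PI / INR m); auto;
    replace (IZR b * (PI / INR m)) with (PI * IZR b / INR m) by (field; lra);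
    [replace (INR m * (al - w) / PI * (PI / INR m)) with (al - w) by (field; lra)
    |replace (INR m * (be + w) / PI * (PI / INR m)) with (be + w) by (field; lra)]; lra. }
  destruct Hb' as [Hb1 Hb2]. apply up_le_of_lt in Hb1. apply lt_up_of_lt in Hb2.
  apply Rle_trans with (near_b v (Z.to_nat (b - up A))).
  + unfold near_b. rewrite Z2Nat.id by lia. replace (up A + (b - up A))%Z with b by ring.
    rewrite indic_true; [lra|]. apply Rabs_def1; lra.
  + apply (sumR_ge_term (near_b v)); [intros; apply indic_01 | unfold nb; lia].
- rewrite sumR_swap.
  apply Rle_trans with (sumR (fun _ => 2 * w / D + 1) nb).
  + apply sumR_le. intros t _. apply count_progression_near_point; lra.
  + rewrite sumR_const. apply Rmult_le_compat_r.
    * assert (0 <= 2 * w / D) by (apply Rmult_le_pos; [lra | left; apply Rinv_0_lt_compat; lra]).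
      lra.
    * eapply Rle_trans; [apply count_integers_between; auto|]. right. unfold A, B. field. lra.
Qed.

Lemma select_indices (P : nat -> Prop) M : exists (N : nat) (g : nat -> nat),
  INR N = sumR (fun i => indic (P i)) M /\
  (forall k, (k < N)%nat -> (g k < M)%nat /\ P (g k)) /\
  (forall k k', (k < N)%nat -> (k' < N)%nat -> g k = g k' -> k = k').
Proof.
set (sel := filter (fun i => if excluded_middle_informative (P i) then true else false) (seq 0 M)).
exists (length sel), (fun k => nth k sel 0%nat). split; [|split].
- unfold sel. clear sel. induction M as [|M IH]; [reflexivity|].
  rewrite seq_S, filter_app, length_app, plus_INR, IH. cbn [sumR]. simpl.
  unfold indic. destruct excluded_middle_informative; simpl; lra.
- intros k Hk. pose proof (nth_In sel 0%nat Hk) as Hin. apply filter_In in Hin.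
  destruct Hin as [H1 H2]. apply in_seq in H1. split; [lia|].
  destruct excluded_middle_informative; auto; discriminate.
- intros k k' Hk Hk' E. eapply NoDup_nth; eauto. apply NoDup_filter, seq_NoDup.
Qed.

(* Pigeonhole on the [K^d + 1] vectors of cells [floor (K * frac (i x_t))], [i = 0..K^d]. *)
Lemma dirichlet_simultaneous (d K : nat) (x : nat -> R) : (1 <= K)%nat ->
  exists m : nat, (1 <= m <= K ^ d)%nat /\ exists b : nat -> Z, forall t, (t < d)%nat ->
  Rabs (INR m * x t - IZR (b t)) < / INR K.
Proof.
intros HK. pose proof (INR_ge1 K HK) as HKR.
set (cell := fun i t => Int_part (INR K * frac_part (INR i * x t))).
assert (Hcell : forall i t, (0 <= cell i t < Z.of_nat K)%Z).
{ intros i t. unfold cell. set (z := INR K * frac_part (INR i * x t)).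
  assert (Hz : 0 <= z < INR K) by (unfold z; destruct (base_fp (INR i * x t)); split; nra).
  destruct (base_Int_part z). split.
  - assert (-1 < Int_part z)%Z by (apply lt_IZR; simpl; lra). lia.
  - apply lt_IZR. rewrite <- INR_IZR_INZ. lra. }
set (code := fun i => undigits K d (fun t => Z.to_nat (cell i t))).
destruct (pigeonhole (K ^ d) code) as [i [j [Hij Ecode]]].
{ intros i _. apply undigits_lt. intros t _. destruct (Hcell i t). lia. }
exists (j - i)%nat. split; [lia|].
exists (fun t => (Int_part (INR j * x t) - Int_part (INR i * x t))%Z).
intros t Ht.
assert (Ec : cell i t = cell j t).
{ assert (Hd : forall i', digit K t (code i') = Z.to_nat (cell i' t)).
  { intro i'. apply digit_undigits; auto. intros s _. destruct (Hcell i' s). lia. }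
  pose proof (Hd i) as E1. rewrite Ecode, Hd in E1. destruct (Hcell i t), (Hcell j t). lia. }
rewrite minus_IZR, minus_INR by lia.
replace ((INR j - INR i) * x t - (IZR (Int_part (INR j * x t)) - IZR (Int_part (INR i * x t))))
  with (frac_part (INR j * x t) - frac_part (INR i * x t)) by (unfold frac_part; ring).
unfold cell in Ec.
set (fi := frac_part (INR i * x t)) in *. set (fj := frac_part (INR j * x t)) in *.
destruct (base_Int_part (INR K * fi)), (base_Int_part (INR K * fj)). rewrite Ec in *.
apply Rmult_lt_reg_l with (INR K); [lra|].
rewrite Rinv_r, <- (Rabs_pos_eq (INR K)) at 1 by lra. rewrite <- Rabs_mult.
apply Rabs_def1; lra.
Qed.

(** * Outer measure of finitely many disjoint boxes *)

Lemma box_vol_nonneg n lo hi : 0 <= box_vol n lo hi.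
Proof. apply prodR_nonneg; intros; apply Rmax_l. Qed.

Lemma prodR_enlarge (w : nat -> R) c : forall st eps, eps > 0 -> exists del, del > 0 /\
  forall d, 0 <= d <= del ->
  prodR (fun j => Rmax 0 (w j + 2 * d)) st c <= prodR (fun j => Rmax 0 (w j)) st c + eps.
Proof.
induction c as [|c IH]; intros st eps He.
{ exists 1; split; [lra|]. intros; simpl; lra. }
set (A := Rmax 0 (w st)). set (P := prodR (fun j => Rmax 0 (w j)) (S st) c).
assert (HA : 0 <= A) by apply Rmax_l.
assert (HP : 0 <= P) by (apply prodR_nonneg; intros; apply Rmax_l).
set (e1 := eps / (2 * (A + 1))).
assert (He1 : e1 > 0) by (unfold e1; apply Rdiv_lt_0_compat; lra).
destruct (IH (S st) e1 He1) as [d1 [Hd1 H1]].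
set (d2 := eps / (4 * (P + e1 + 1))).
assert (Hd2 : d2 > 0) by (unfold d2; apply Rdiv_lt_0_compat; lra).
exists (Rmin d1 d2). split; [apply Rmin_glb_lt; lra|].
intros d Hd. pose proof (Rmin_l d1 d2). pose proof (Rmin_r d1 d2). simpl. fold A P.
specialize (H1 d ltac:(lra)). fold P in H1.
set (P' := prodR (fun j => Rmax 0 (w j + 2 * d)) (S st) c) in *.
assert (HP' : 0 <= P') by (apply prodR_nonneg; intros; apply Rmax_l).
assert (HA' : 0 <= Rmax 0 (w st + 2 * d) <= A + 2 * d)
  by (unfold A, Rmax; repeat destruct Rle_dec; lra).
assert (A * e1 <= eps / 2).
{ apply Rle_trans with ((A + 1) * e1); [nra|]. right; unfold e1; field; lra. }
assert (2 * d * (P + e1) <= eps / 2).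
{ apply Rle_trans with (2 * d2 * (P + e1 + 1)); [nra|]. right; unfold d2; field; lra. }
apply Rle_trans with ((A + 2 * d) * (P + e1)); [apply Rmult_le_compat; lra | nra].
Qed.

Lemma box_vol_enlarge n (lo hi : nat -> R) eps : eps > 0 -> exists del, del > 0 /\
  box_vol n (fun j => lo j - del) (fun j => hi j + del) <= box_vol n lo hi + eps.
Proof.
intros He. destruct (prodR_enlarge (fun j => hi j - lo j) (n - 1) 2 eps He) as [d [Hd H]].
exists d; split; auto. unfold box_vol.
rewrite (prodR_ext _ (fun j => Rmax 0 (hi j - lo j + 2 * d))); [apply H; lra|].
intros; f_equal; lra.
Qed.

Definition overlap_len a b c e := Rmax 0 (Rmin b e - Rmax a c).

Ltac unfold_overlap := unfold overlap_len, Rmax, Rmin in *; repeat destruct Rle_dec; try lra.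

Lemma overlap_len_nonneg a b c e : 0 <= overlap_len a b c e.
Proof. unfold_overlap. Qed.
Lemma overlap_len_split a m b c e : a <= m <= b ->
  overlap_len a b c e = overlap_len a m c e + overlap_len m b c e.
Proof. intros; unfold_overlap. Qed.
Lemma overlap_len_le_l a b c e : a <= b -> overlap_len a b c e <= b - a.
Proof. intros; unfold_overlap. Qed.
Lemma overlap_len_le_r a b c e : overlap_len a b c e <= Rmax 0 (e - c).
Proof. unfold_overlap. Qed.
Lemma overlap_len_sub a b c e : c <= a <= b -> b <= e -> overlap_len a b c e = b - a.
Proof. intros; unfold_overlap. Qed.
Lemma overlap_len_sup a b c e : a <= c -> e <= b -> overlap_len a b c e = Rmax 0 (e - c).
Proof. intros; unfold_overlap. Qed.
Lemma overlap_len_disjoint a b c e : b < c \/ e < a -> overlap_len a b c e = 0.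
Proof. intros; unfold_overlap. Qed.

Definition meet_vol n (a b c e : nat -> R) :=
  prodR (fun j => overlap_len (a j) (b j) (c j) (e j)) 2 (n - 1).

Definition upd (f : nat -> R) j0 v := fun j => if Nat.eq_dec j j0 then v else f j.

Lemma meet_vol_nonneg n a b c e : 0 <= meet_vol n a b c e.
Proof. apply prodR_nonneg; intros; apply overlap_len_nonneg. Qed.

Lemma meet_vol_split n a b c e j0 m : (2 <= j0 <= n)%nat -> a j0 <= m <= b j0 ->
  meet_vol n a b c e = meet_vol n a (upd b j0 m) c e + meet_vol n (upd a j0 m) b c e.
Proof.
intros Hj Hm. apply prodR_split with j0; [lia| |].
- unfold upd. destruct Nat.eq_dec; [|congruence]. apply overlap_len_split; lra.
- intros j Hne. unfold upd. destruct Nat.eq_dec; [congruence|auto].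
Qed.

Lemma meet_vol_disjoint n a b c e j : (2 <= j <= n)%nat -> b j < c j \/ e j < a j ->
  meet_vol n a b c e = 0.
Proof. intros Hj H. apply prodR_zero with j; [lia|]. now apply overlap_len_disjoint. Qed.

Lemma nested_intervals (a b : nat -> R) :
  (forall t, a t <= a (S t)) -> (forall t, b (S t) <= b t) -> (forall t, a t <= b t) ->
  exists x, forall t, a t <= x <= b t.
Proof.
intros Ha Hb Hab.
assert (Hle : forall t t', a t <= b t').
{ assert (Hmono : forall f : nat -> R, (forall t, f t <= f (S t)) ->
    forall t t', (t <= t')%nat -> f t <= f t').
  { intros f Hf t t' Ht. induction Ht; [lra|]. specialize (Hf m). lra. }
  intros t t'. destruct (Nat.le_ge_cases t t') as [Ht|Ht].
  - specialize (Hmono a Ha t t' Ht). specialize (Hab t'). lra.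
  - specialize (Hmono (fun t => - b t) ltac:(intro s; specialize (Hb s); lra) t' t Ht).
    specialize (Hab t). simpl in Hmono. lra. }
destruct (completeness (fun v => exists t, v = a t)) as [x [Hub Hlub]].
- exists (b 0%nat). intros v [t ->]. apply Hle.
- exists (a 0%nat), 0%nat. reflexivity.
- exists x. intros t. split; [apply Hub; eauto|].
  apply Hlub. intros v [t' ->]. apply Hle.
Qed.

Lemma dependent_choice {A : Type} (P : A -> Prop) (Rl : A -> A -> Prop) (x0 : A) :
  P x0 -> (forall x, P x -> exists y, P y /\ Rl x y) ->
  exists s : nat -> A, s O = x0 /\ forall t, P (s t) /\ Rl (s t) (s (S t)).
Proof.
intros H0 H.
destruct (choice (fun x y => P x -> P y /\ Rl x y)) as [g Hg].
{ intro x. destruct (classic (P x)) as [Hx|Hx].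
  - destruct (H x Hx) as [y Hy]. exists y. auto.
  - exists x. tauto. }
exists (fun t => Nat.iter t g x0). split; [reflexivity|].
intro t. assert (Ht : P (Nat.iter t g x0)) by (induction t; simpl; [|apply Hg]; auto).
split; [auto|]. apply Hg, Ht.
Qed.

Lemma separation_margin n (x : nat -> R) (pl ph : nat -> nat -> R) N (P : nat -> Prop) :
  (forall i, (i < N)%nat -> P i ->
     exists j, (2 <= j <= n)%nat /\ (x j < pl i j \/ ph i j < x j)) ->
  exists eta, eta > 0 /\ forall i, (i < N)%nat -> P i ->
     exists j, (2 <= j <= n)%nat /\ (x j + eta < pl i j \/ ph i j + eta < x j).
Proof.
induction N as [|N IH]; intros H.
{ exists 1; split; [lra|]; intros; lia. }
destruct IH as [e1 [He1 H1]]; [intros; apply H; auto; lia|].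
destruct (classic (P N)) as [HP|HP].
- destruct (H N ltac:(lia) HP) as [j [Hj Hj']].
  set (g := Rmax (pl N j - x j) (x j - ph N j)).
  assert (Hg : g > 0) by (unfold g, Rmax; destruct Rle_dec; lra).
  exists (Rmin e1 (g / 2)). split; [apply Rmin_glb_lt; lra|].
  pose proof (Rmin_l e1 (g / 2)). pose proof (Rmin_r e1 (g / 2)).
  intros i Hi HPi. destruct (Nat.eq_dec i N) as [->|Hne].
  + exists j. split; auto. unfold g, Rmax in *; destruct Rle_dec; lra.
  + destruct (H1 i ltac:(lia) HPi) as [j' [Hj1 Hj2]]. exists j'. split; auto. lra.
- exists e1. split; auto. intros i Hi HPi. destruct (Nat.eq_dec i N) as [->|]; [contradiction|].
  apply H1; auto; lia.
Qed.

Lemma pow2_large w eta : eta > 0 -> exists t, w / 2 ^ t < eta.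
Proof.
intros He. destruct (Pow_x_infinity 2 ltac:(rewrite Rabs_pos_eq; lra) (w / eta + 1)) as [t Ht].
exists t. specialize (Ht t (le_n t)). rewrite Rabs_pos_eq in Ht by (apply pow_le; lra).
assert (Hp : 0 < 2 ^ t) by (apply pow_lt; lra).
apply Rmult_lt_reg_r with (2 ^ t / eta); [apply Rdiv_lt_0_compat; lra|].
replace (w / 2 ^ t * (2 ^ t / eta)) with (w / eta) by (field; lra).
replace (eta * (2 ^ t / eta)) with (2 ^ t) by (field; lra). lra.
Qed.

Section Bisection.

Variables (n N : nat) (pl ph ul uh : nat -> nat -> R).

Definition undercovered (a b : nat -> R) : Prop :=
  (forall j, (2 <= j <= n)%nat -> a j <= b j) /\
  forall K, sumR (fun k => meet_vol n a b (ul k) (uh k)) K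
          < sumR (fun i => meet_vol n a b (pl i) (ph i)) N.

(* Both halves being covered would make the whole box covered, by additivity of [meet_vol]. *)
Lemma undercovered_halve_coord a b j0 : (2 <= j0 <= n)%nat -> undercovered a b ->
  let m := (a j0 + b j0) / 2 in undercovered a (upd b j0 m) \/ undercovered (upd a j0 m) b.
Proof.
intros Hj [Hab HK] m.
assert (Hm : a j0 <= m <= b j0) by (specialize (Hab j0 Hj); unfold m; lra).
set (S1 := fun c e => meet_vol n a (upd b j0 m) c e).
set (S2 := fun c e => meet_vol n (upd a j0 m) b c e).
assert (Hdichot : forall (S' : (nat -> R) -> (nat -> R) -> R),
  (forall K, sumR (fun k => S' (ul k) (uh k)) K < sumR (fun i => S' (pl i) (ph i)) N) \/
  exists K, sumR (fun i => S' (pl i) (ph i)) N <= sumR (fun k => S' (ul k) (uh k)) K).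
{ intros S'. destruct (classic (exists K, sumR (fun i => S' (pl i) (ph i)) N
                                        <= sumR (fun k => S' (ul k) (uh k)) K)) as [|Hno]; auto.
  left. intro K. apply Rnot_le_lt. intro. apply Hno. eauto. }
destruct (Hdichot S1) as [H1|[K1 H1]].
{ left. split; auto. intros j Hj'. specialize (Hab j Hj'). unfold upd; destruct Nat.eq_dec as [->|]; lra. }
destruct (Hdichot S2) as [H2|[K2 H2]].
{ right. split; auto. intros j Hj'. specialize (Hab j Hj'). unfold upd; destruct Nat.eq_dec as [->|]; lra. }
exfalso. specialize (HK (max K1 K2)).
rewrite (sumR_ext _ (fun k => S1 (ul k) (uh k) + S2 (ul k) (uh k))),
  (sumR_ext (fun i => meet_vol n a b (pl i) (ph i)) (fun i => S1 (pl i) (ph i) + S2 (pl i) (ph i))),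
  !sumR_plus in HK by (intros; apply meet_vol_split; auto).
assert (sumR (fun k => S1 (ul k) (uh k)) K1 <= sumR (fun k => S1 (ul k) (uh k)) (max K1 K2))
  by (apply sumR_mono; [intros; apply meet_vol_nonneg|lia]).
assert (sumR (fun k => S2 (ul k) (uh k)) K2 <= sumR (fun k => S2 (ul k) (uh k)) (max K1 K2))
  by (apply sumR_mono; [intros; apply meet_vol_nonneg|lia]).
lra.
Qed.

Lemma undercovered_halve_first c a b : (c <= n - 1)%nat -> undercovered a b ->
  exists a' b', undercovered a' b' /\
  (forall j, (2 <= j <= n)%nat -> a j <= a' j /\ b' j <= b j) /\
  (forall j, (2 <= j < 2 + c)%nat -> b' j - a' j = (b j - a j) / 2) /\
  (forall j, ~ (2 <= j < 2 + c)%nat -> a' j = a j /\ b' j = b j).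
Proof.
induction c as [|c IH]; intros Hc HI.
{ exists a, b. split; [auto|]. split; [intros; lra|]. split; intros; [lia | auto]. }
destruct (IH ltac:(lia) HI) as [a1 [b1 [HI1 [Hn1 [Hh1 Hs1]]]]].
set (j0 := (2 + c)%nat). assert (Hj0 : (2 <= j0 <= n)%nat) by (unfold j0; lia).
destruct (Hs1 j0 ltac:(unfold j0; lia)) as [Ea Eb].
pose proof (proj1 HI1 j0 Hj0) as Hab1.
set (m := (a1 j0 + b1 j0) / 2).
assert (Hm : a1 j0 <= m <= b1 j0) by (unfold m; lra).
destruct (undercovered_halve_coord a1 b1 j0 Hj0 HI1) as [HL|HR].
- exists a1, (upd b1 j0 m). split; [exact HL|]. unfold upd.
  split; [|split]; intros j Hj; destruct (Nat.eq_dec j j0) as [->|Hne].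
  + destruct (Hn1 j0 Hj0); lra.
  + apply Hn1; auto.
  + unfold m. rewrite Ea, Eb. lra.
  + apply Hh1; unfold j0 in *; lia.
  + unfold j0 in *; lia.
  + apply Hs1; unfold j0 in *; lia.
- exists (upd a1 j0 m), b1. split; [exact HR|]. unfold upd.
  split; [|split]; intros j Hj; destruct (Nat.eq_dec j j0) as [->|Hne].
  + destruct (Hn1 j0 Hj0); lra.
  + apply Hn1; auto.
  + unfold m. rewrite Ea, Eb. lra.
  + apply Hh1; unfold j0 in *; lia.
  + unfold j0 in *; lia.
  + apply Hs1; unfold j0 in *; lia.
Qed.

Lemma undercovered_nested a0 b0 : undercovered a0 b0 ->
  exists a b : nat -> nat -> R, a O = a0 /\ b O = b0 /\ forall t, undercovered (a t) (b t) /\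
  forall j, (2 <= j <= n)%nat -> a t j <= a (S t) j /\ b (S t) j <= b t j /\
    b (S t) j - a (S t) j = (b t j - a t j) / 2.
Proof.
intros H0.
destruct (dependent_choice (fun ab => undercovered (fst ab) (snd ab))
  (fun ab ab' => forall j, (2 <= j <= n)%nat -> fst ab j <= fst ab' j /\ snd ab' j <= snd ab j /\
     snd ab' j - fst ab' j = (snd ab j - fst ab j) / 2) (a0, b0)) as [s [Hs0 Hs]]; auto.
{ intros [a b] Hab. destruct (undercovered_halve_first (n - 1) a b ltac:(lia) Hab)
    as [a' [b' [H1 [H2 [H3 _]]]]].
  exists (a', b'). split; auto. intros j Hj. destruct (H2 j Hj). simpl. repeat split; auto.
  apply H3; lia. }
exists (fun t => fst (s t)), (fun t => snd (s t)). rewrite Hs0. auto.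
Qed.

Hypothesis family_disjoint : forall i i', (i < N)%nat -> (i' < N)%nat -> i <> i' ->
  exists j, (2 <= j <= n)%nat /\ (ph i j < pl i' j \/ ph i' j < pl i j).
Hypothesis family_covered : forall i y, (i < N)%nat -> in_box n (pl i) (ph i) y ->
  exists k eta, eta > 0 /\ forall j, (2 <= j <= n)%nat -> ul k j + eta <= y j <= uh k j - eta.

(* Near [x] only the family box containing [x] (if any) meets a small box, and a cover box
   containing that box with a margin already covers all of it. *)
Lemma not_undercovered_near x : exists eta, eta > 0 /\ forall a b,
  (forall j, (2 <= j <= n)%nat -> a j <= x j <= b j /\ b j - a j < eta) -> ~ undercovered a b.
Proof.
destruct (classic (exists i0, (i0 < N)%nat /\ in_box n (pl i0) (ph i0) x))
  as [[i0 [Hi0 Hin]]|Hnone].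
- destruct (family_covered i0 x Hi0 Hin) as [k0 [eta1 [Heta1 Hk0]]].
  destruct (separation_margin n x pl ph N (fun i => i <> i0)) as [eta2 [Heta2 Hg]].
  { intros i Hi Hne. destruct (family_disjoint i0 i Hi0 Hi (fun e => Hne (eq_sym e)))
      as [j [Hj Hj']].
    exists j. split; auto. destruct (Hin j Hj). lra. }
  exists (Rmin eta1 eta2). split; [apply Rmin_glb_lt; lra|].
  pose proof (Rmin_l eta1 eta2). pose proof (Rmin_r eta1 eta2).
  intros a b Hab [_ HK]. specialize (HK (S k0)).
  assert (Ecov : meet_vol n a b (ul k0) (uh k0) = prodR (fun j => b j - a j) 2 (n - 1)).
  { apply prodR_ext. intros j Hj. specialize (Hab j ltac:(lia)). specialize (Hk0 j ltac:(lia)).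
    apply overlap_len_sub; lra. }
  assert (Efam : sumR (fun i => meet_vol n a b (pl i) (ph i)) N = meet_vol n a b (pl i0) (ph i0)).
  { apply (sumR_single (fun i => meet_vol n a b (pl i) (ph i))); auto. intros i Hi Hne.
    destruct (Hg i Hi Hne) as [j [Hj Hj']]. specialize (Hab j Hj).
    apply (meet_vol_disjoint n a b _ _ j Hj). lra. }
  assert (meet_vol n a b (pl i0) (ph i0) <= prodR (fun j => b j - a j) 2 (n - 1)).
  { apply prodR_le. intros j Hj. specialize (Hab j ltac:(lia)).
    split; [apply overlap_len_nonneg | apply overlap_len_le_l; lra]. }
  pose proof (sumR_ge_term (fun k => meet_vol n a b (ul k) (uh k)) (S k0) k0
    ltac:(intros; apply meet_vol_nonneg) ltac:(lia)).
  lra.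
- destruct (separation_margin n x pl ph N (fun _ => True)) as [eta [Heta Hg]].
  { intros i Hi _. apply NNPP; intro Hc. apply Hnone. exists i. split; auto.
    intros j Hj. apply NNPP; intro Hc2. apply Hc. exists j. split; auto. lra. }
  exists eta. split; auto. intros a b Hab [_ HK]. specialize (HK 0%nat). simpl in HK.
  rewrite sumR_zero in HK; [lra|]. intros i Hi.
  destruct (Hg i Hi I) as [j [Hj Hj']]. specialize (Hab j Hj).
  apply (meet_vol_disjoint n a b _ _ j Hj). lra.
Qed.

Lemma not_undercovered a0 b0 w : (forall j, (2 <= j <= n)%nat -> b0 j - a0 j <= w) ->
  ~ undercovered a0 b0.
Proof.
intros Hw H0. destruct (undercovered_nested a0 b0 H0) as [a [b [Ha0 [Hb0 Hs]]]].
assert (Hside : forall t j, (2 <= j <= n)%nat -> b t j - a t j <= w / 2 ^ t).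
{ induction t as [|t IH]; intros j Hj.
  - subst. simpl. specialize (Hw j Hj). lra.
  - destruct (proj2 (Hs t) j Hj) as [_ [_ E]]. rewrite E. specialize (IH j Hj).
    simpl. unfold Rdiv in *. rewrite Rinv_mult. lra. }
assert (Hx : forall j, exists v, (2 <= j <= n)%nat -> forall t, a t j <= v <= b t j).
{ intro j. destruct (le_dec 2 j), (le_dec j n); try (exists 0; lia).
  destruct (nested_intervals (fun t => a t j) (fun t => b t j)) as [v Hv];
    try (intro t; destruct (proj2 (Hs t) j ltac:(lia)); lra);
    try (intro t; apply (proj1 (proj1 (Hs t))); lia).
  exists v. auto. }
destruct (choice _ Hx) as [x Hxs].
destruct (not_undercovered_near x) as [eta [Heta Hno]].
destruct (pow2_large w eta Heta) as [t Ht].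
apply (Hno (a t) (b t)); [|apply Hs].
intros j Hj. specialize (Hxs j Hj t). specialize (Hside t j Hj). split; [auto|lra].
Qed.

End Bisection.

Lemma disjoint_boxes_outer_measure_ge n (E : (nat -> R) -> Prop) N (pl ph : nat -> nat -> R)
  (lo0 hi0 : R) : lo0 <= hi0 ->
  (forall i j, (i < N)%nat -> (2 <= j <= n)%nat -> lo0 <= pl i j <= ph i j /\ ph i j <= hi0) ->
  (forall i y, (i < N)%nat -> in_box n (pl i) (ph i) y -> E y) ->
  (forall i i', (i < N)%nat -> (i' < N)%nat -> i <> i' ->
     exists j, (2 <= j <= n)%nat /\ (ph i j < pl i' j \/ ph i' j < pl i j)) ->
  lebesgue_outer_measure_ge n E (sumR (fun i => box_vol n (pl i) (ph i)) N).
Proof.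
intros Hlohi Hbox HS Hdisj lo hi s Hcov Hsum.
set (A := sumR (fun i => box_vol n (pl i) (ph i)) N).
apply Rnot_lt_le; intro Hlt. set (eps := (A - s) / 2).
(* enlarge the [k]-th cover box by [del k], at a total cost below [eps] *)
destruct (choice (fun k d => d > 0 /\ box_vol n (fun j => lo k j - d) (fun j => hi k j + d)
                              <= box_vol n (lo k) (hi k) + eps / 2 ^ S k)) as [del Hdel].
{ intro k. apply box_vol_enlarge. apply Rdiv_lt_0_compat; [unfold eps; lra | apply pow_lt; lra]. }
apply (not_undercovered n N pl ph (fun k j => lo k j - del k) (fun k j => hi k j + del k)
         Hdisj) with (fun _ => lo0) (fun _ => hi0) (hi0 - lo0).
- intros i y Hi Hy. destruct (Hcov y (HS i y Hi Hy)) as [k Hk].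
  exists k, (del k). split; [apply Hdel|]. intros j Hj. specialize (Hk j Hj). lra.
- intros; lra.
- split; [intros; lra|]. intro K.
  replace (sumR (fun i => meet_vol n (fun _ => lo0) (fun _ => hi0) (pl i) (ph i)) N) with A.
  2:{ apply sumR_ext. intros i Hi. apply prodR_ext. intros j Hj.
      destruct (Hbox i j Hi ltac:(lia)). symmetry. apply overlap_len_sup; lra. }
  apply Rle_lt_trans with (sumR (fun k => box_vol n (lo k) (hi k) + eps / 2 ^ S k) K).
  + apply sumR_le. intros k Hk. eapply Rle_trans; [|apply Hdel].
    apply prodR_le. intros j Hj. split; [apply overlap_len_nonneg | apply overlap_len_le_r].
  + rewrite sumR_plus, sumR_geom.
    pose proof (infinite_sum_ge_partial _ s Hsum ltac:(intro; apply box_vol_nonneg) K).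
    assert (0 < eps / 2 ^ K) by (apply Rdiv_lt_0_compat; [unfold eps; lra | apply pow_lt; lra]).
    unfold eps in *. lra.
Qed.

(** * Admissible centres and grids of them *)

Definition Qroot (n : nat) (Q : R) := Rpower Q (/ INR (n - 1)).

Definition approx_radius n Q mu0 c4 := PI * c4 / ((mu0 * Q) * Qroot n Q).

(* A centre [2 pi a_j / q] of the theorem's boxes, written with [q = 4 m] and [a_j = 2 b_j]. *)
Definition fraction_point n Q mu0 (p : nat -> R) : Prop :=
  exists m : nat, (1 <= m)%nat /\ mu0 * Q <= INR m <= Q /\
  exists b : nat -> nat, forall j, (2 <= j <= n)%nat ->
    (1 <= b j <= 4 * m)%nat /\ p j = PI * INR (b j) / INR m.

Lemma fraction_point_of_ints n Q mu0 m (z : nat -> Z) : (1 <= m)%nat -> mu0 * Q <= INR m <= Q ->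
  (forall j, (2 <= j <= n)%nat -> (1 <= z j <= 4 * Z.of_nat m)%Z) ->
  fraction_point n Q mu0 (fun j => PI * IZR (z j) / INR m).
Proof.
intros Hm HmQ Hz. exists m. repeat split; try tauto.
exists (fun j => Z.to_nat (z j)). intros j Hj. specialize (Hz j Hj).
rewrite (INR_IZR_INZ (Z.to_nat (z j))), Z2Nat.id by lia. split; [lia | reflexivity].
Qed.

Lemma fraction_point_near n Q mu0 m (z : nat -> Z) (c : nat -> R) w h :
  (1 <= m)%nat -> mu0 * Q <= INR m <= Q -> 0 < h ->
  (forall j, (2 <= j <= n)%nat ->
     w + h <= c j <= 2 * PI - w - h /\ Rabs (c j - PI * IZR (z j) / INR m) <= w) ->
  exists p, fraction_point n Q mu0 p /\
    forall j, (2 <= j <= n)%nat -> h <= p j <= 2 * PI - h /\ Rabs (p j - c j) <= w.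
Proof.
intros Hm HmQ Hh Hc. pose proof PI_RGT_0. pose proof (INR_ge1 m Hm).
assert (Hp : forall j, (2 <= j <= n)%nat -> h <= PI * IZR (z j) / INR m <= 2 * PI - h).
{ intros j Hj. destruct (Hc j Hj) as [Hcj Hz]. revert Hz. unfold Rabs. destruct Rcase_abs; lra. }
exists (fun j => PI * IZR (z j) / INR m). split.
- apply fraction_point_of_ints; auto. intros j Hj. specialize (Hp j Hj).
  assert (Hz : 0 < IZR (z j) < 2 * INR m).
  { split; apply Rmult_lt_reg_r with (PI / INR m); try (apply Rdiv_lt_0_compat; lra);
    replace (IZR (z j) * (PI / INR m)) with (PI * IZR (z j) / INR m) by (field; lra);
    [|replace (2 * INR m * (PI / INR m)) with (2 * PI) by (field; lra)]; lra. }
  destruct Hz as [Hz1 Hz2]. apply lt_IZR in Hz1. rewrite INR_IZR_INZ in Hz2.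
  assert (z j < 2 * Z.of_nat m)%Z by (apply lt_IZR; rewrite mult_IZR; simpl; lra). lia.
- intros j Hj. split; [apply Hp; auto|]. rewrite Rabs_minus_sym. apply Hc; auto.
Qed.

Lemma fraction_box_sub_approx_set n Q mu0 c4 p h y :
  fraction_point n Q mu0 p -> h < approx_radius n Q mu0 c4 ->
  (forall j, (2 <= j <= n)%nat -> h <= p j <= 2 * PI - h) ->
  in_box n (fun j => p j - h) (fun j => p j + h) y -> approx_set n Q mu0 c4 y.
Proof.
intros [m [Hm [HmQ [b Hb]]]] Hh Hp Hy. split.
{ intros j Hj. specialize (Hy j Hj). specialize (Hp j Hj). lra. }
exists (4 * m)%nat, (fun j => 2 * b j)%nat.
replace (INR (4 * m)) with (4 * INR m) by (rewrite mult_INR; simpl; lra).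
split; [lra|]. split; [lra|]. split; [rewrite Nat.mul_comm; apply Nat.Div0.mod_mul|].
intros j Hj. destruct (Hb j Hj) as [Hbj Ep]. split; [lia|].
split; [rewrite Nat.mul_comm; apply Nat.Div0.mod_mul|].
pose proof (INR_ge1 m Hm). specialize (Hy j Hj). specialize (Hp j Hj).
replace (2 * PI * INR (2 * b j) / (4 * INR m)) with (p j)
  by (rewrite Ep, mult_INR; simpl (INR 2); field; lra).
apply Rle_lt_trans with h; [apply Rabs_le; lra | exact Hh].
Qed.

Lemma fraction_boxes_measure_ge n Q mu0 c4 N (p : nat -> nat -> R) h :
  0 < h < approx_radius n Q mu0 c4 ->
  (forall i, (i < N)%nat -> fraction_point n Q mu0 (p i) /\
     forall j, (2 <= j <= n)%nat -> h <= p i j <= 2 * PI - h) ->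
  (forall i i', (i < N)%nat -> (i' < N)%nat -> i <> i' ->
     exists j, (2 <= j <= n)%nat /\ 2 * h < Rabs (p i j - p i' j)) ->
  lebesgue_outer_measure_ge n (approx_set n Q mu0 c4) (INR N * (2 * h) ^ (n - 1)).
Proof.
intros Hh Hp Hsep.
replace (INR N * (2 * h) ^ (n - 1))
  with (sumR (fun i => box_vol n (fun j => p i j - h) (fun j => p i j + h)) N).
2:{ rewrite <- sumR_const. apply sumR_ext. intros i Hi. unfold box_vol.
    rewrite <- (prodR_const (2 * h) 2 (n - 1)). apply prodR_ext. intros j Hj.
    rewrite Rmax_right; lra. }
apply disjoint_boxes_outer_measure_ge with 0 (2 * PI).
- pose proof PI_RGT_0. lra.
- intros i j Hi Hj. destruct (Hp i Hi) as [_ H]. specialize (H j Hj). lra.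
- intros i y Hi Hy. destruct (Hp i Hi) as [Hf Hin].
  apply (fraction_box_sub_approx_set n Q mu0 c4 (p i) h); auto; lra.
- intros i i' Hi Hi' Hne. destruct (Hsep i i' Hi Hi' Hne) as [j [Hj Ha]]. exists j.
  split; auto. unfold Rabs in Ha; destruct Rcase_abs; lra.
Qed.

Definition grid_point L base D (i j : nat) : R := base + INR (digit L (j - 2) i) * D.

Lemma grid_fractions_measure_ge n Q mu0 c4 L base D h e (P : nat -> Prop) :
  (0 < L)%nat -> 0 < h < approx_radius n Q mu0 c4 -> 0 < D -> 2 * h + 2 * e < D ->
  (forall i, (i < L ^ (n - 1))%nat -> P i -> exists p, fraction_point n Q mu0 p /\
     forall j, (2 <= j <= n)%nat ->
       h <= p j <= 2 * PI - h /\ Rabs (p j - grid_point L base D i j) <= e) ->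
  lebesgue_outer_measure_ge n (approx_set n Q mu0 c4)
    (sumR (fun i => indic (P i)) (L ^ (n - 1)) * (2 * h) ^ (n - 1)).
Proof.
intros HL Hh HD HDe Hnear.
destruct (select_indices P (L ^ (n - 1))) as [N [g [EN [Hg Hginj]]]]. rewrite <- EN.
destruct (choice (fun k p => (k < N)%nat -> fraction_point n Q mu0 p /\
  forall j, (2 <= j <= n)%nat -> h <= p j <= 2 * PI - h /\
    Rabs (p j - grid_point L base D (g k) j) <= e)) as [p Hp].
{ intro k. destruct (lt_dec k N) as [Hk|Hk].
  - destruct (Hg k Hk). destruct (Hnear (g k)) as [p Hpk]; auto. exists p; auto.
  - exists (fun _ => 0). tauto. }
apply (fraction_boxes_measure_ge n Q mu0 c4 N p h Hh).
{ intros k Hk. destruct (Hp k Hk) as [Hf Hpk]. split; auto. intros j Hj. apply Hpk; auto. }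
intros k k' Hk Hk' Hne.
destruct (digits_differ L (n - 1) (g k) (g k') HL (proj1 (Hg k Hk)) (proj1 (Hg k' Hk'))
  (fun E => Hne (Hginj k k' Hk Hk' E))) as [t [Ht Hdt]].
exists (t + 2)%nat. split; [lia|].
destruct (proj2 (Hp k Hk) (t + 2)%nat ltac:(lia)) as [_ E1].
destruct (proj2 (Hp k' Hk') (t + 2)%nat ltac:(lia)) as [_ E2].
assert (Hgap : D <= Rabs (grid_point L base D (g k) (t + 2) - grid_point L base D (g k') (t + 2))).
{ unfold grid_point. replace (t + 2 - 2)%nat with t by lia.
  replace (base + INR (digit L t (g k)) * D - (base + INR (digit L t (g k')) * D))
    with ((INR (digit L t (g k)) - INR (digit L t (g k'))) * D) by ring.
  rewrite Rabs_mult, (Rabs_pos_eq D) by lra. pose proof (INR_dist_ge1 _ _ Hdt). nra. }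
revert E1 E2 Hgap. generalize (p k (t + 2)%nat), (p k' (t + 2)%nat),
  (grid_point L base D (g k) (t + 2)), (grid_point L base D (g k') (t + 2)).
intros. unfold Rabs in *. repeat destruct Rcase_abs; lra.
Qed.

Lemma outer_measure_ge_weaken n E m m' :
  lebesgue_outer_measure_ge n E m' -> m <= m' -> lebesgue_outer_measure_ge n E m.
Proof. intros H Hm lo hi s H1 H2. specialize (H lo hi s H1 H2). lra. Qed.

Definition nfloor (x : R) : nat := Z.to_nat (Int_part x).

Lemma nfloor_spec x : 0 <= x -> INR (nfloor x) <= x < INR (nfloor x) + 1.
Proof.
intros Hx. destruct (base_Int_part x) as [H1 H2].
assert (-1 < Int_part x)%Z by (apply lt_IZR; simpl; lra).
unfold nfloor. rewrite INR_IZR_INZ, Z2Nat.id by lia. lra.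
Qed.

Lemma Qroot_ge1 n Q : 1 <= Q -> 1 <= Qroot n Q.
Proof.
intros HQ. unfold Qroot. rewrite <- (Rpower_O Q) at 1 by lra. apply Rle_Rpower; auto.
destruct (n - 1)%nat; [simpl; rewrite Rinv_0; lra|]. left. apply Rinv_0_lt_compat, lt_0_INR. lia.
Qed.

Lemma Qroot_pow n Q : (2 <= n)%nat -> 1 <= Q -> Qroot n Q ^ (n - 1) = Q.
Proof.
intros Hn HQ. pose proof (Qroot_ge1 n Q HQ). rewrite <- Rpower_pow by lra. unfold Qroot.
rewrite Rpower_mult, Rinv_l by (apply not_0_INR; lia). apply Rpower_1; lra.
Qed.

Lemma grid_point_bounds L base D i j : (0 < L)%nat -> 0 <= D ->
  base <= grid_point L base D i j <= base + INR (L - 1) * D.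
Proof.
intros HL HD. unfold grid_point. pose proof (digit_lt L (j - 2) i HL).
assert (0 <= INR (digit L (j - 2) i) <= INR (L - 1)) by (split; [apply pos_INR | apply le_INR; lia]).
nra.
Qed.

Lemma target_of_grid_count (c4 x cnt : R) (L d : nat) : 0 <= c4 -> 0 <= x ->
  c4 / 6 <= INR L * x -> INR L ^ d / 2 <= cnt -> (c4 / 6) ^ d / 2 <= cnt * x ^ d.
Proof.
intros Hc Hx HL Hcnt.
assert ((c4 / 6) ^ d <= INR L ^ d * x ^ d)
  by (rewrite <- Rpow_mult_distr; apply pow_incr; lra).
assert (0 <= x ^ d) by (apply pow_le; lra). nra.
Qed.

Lemma mu0_le_inv144 n mu0 : (2 <= n)%nat -> mu0 <= / (4 * PI) ^ n -> mu0 <= / 144.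
Proof.
intros Hn H. pose proof PI_RGT_0. assert (PI > 3) by (pose proof PI2_3_2; lra).
assert (144 <= (4 * PI) ^ n).
{ replace n with (2 + (n - 2))%nat by lia. rewrite pow_add. simpl.
  assert (1 <= (4 * PI) ^ (n - 2)) by (apply pow_R1_Rle; lra). nra. }
apply Rle_trans with (/ (4 * PI) ^ n); auto. apply Rinv_le_contravar; lra.
Qed.

Lemma mu0_mul_pow11_le n mu0 : (1 <= n)%nat -> mu0 <= / (4 * PI) ^ n ->
  mu0 * 11 ^ (n - 1) <= / (4 * PI).
Proof.
intros Hn H. pose proof PI_RGT_0. assert (HP : PI > 3) by (pose proof PI2_3_2; lra).
assert (E : (4 * PI) ^ n = 4 * PI * (4 * PI) ^ (n - 1))
  by (replace n with (S (n - 1)) at 1 by lia; reflexivity).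
assert (0 < (4 * PI) ^ (n - 1)) by (apply pow_lt; lra).
assert (11 ^ (n - 1) <= (4 * PI) ^ (n - 1)) by (apply pow_incr; lra).
assert (0 <= 11 ^ (n - 1)) by (apply pow_le; lra).
apply Rle_trans with (/ (4 * PI) ^ n * 11 ^ (n - 1)); [apply Rmult_le_compat_r; auto|].
rewrite E, Rinv_mult.
apply Rle_trans with (/ (4 * PI) * (/ (4 * PI) ^ (n - 1) * (4 * PI) ^ (n - 1))).
- rewrite <- Rmult_assoc. apply Rmult_le_compat_l; auto.
  rewrite <- Rinv_mult. left; apply Rinv_0_lt_compat. nra.
- rewrite Rinv_l by lra. lra.
Qed.

Lemma floor_Q_denominator Q mu0 : 1 <= Q -> mu0 <= / 144 ->
  (1 <= nfloor Q)%nat /\ mu0 * Q <= INR (nfloor Q) <= Q /\ Q / 2 < INR (nfloor Q).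
Proof.
intros HQ Hmu. destruct (nfloor_spec Q) as [H1 H2]; [lra|].
assert (Hm : (1 <= nfloor Q)%nat) by (destruct (nfloor Q); [simpl in *; lra | lia]).
pose proof (INR_ge1 _ Hm). assert (mu0 * Q <= / 144 * Q) by (apply Rmult_le_compat_r; lra).
repeat split; auto; lra.
Qed.

(** * The three regimes *)

Lemma measure_ge_large_radius n Q mu0 c4 : 1 <= Q -> 0 < mu0 <= / 144 ->
  PI < approx_radius n Q mu0 c4 ->
  lebesgue_outer_measure_ge n (approx_set n Q mu0 c4) ((2 * PI) ^ (n - 1)).
Proof.
intros HQ Hmu Hr. pose proof PI_RGT_0.
destruct (floor_Q_denominator Q mu0 HQ ltac:(lra)) as [Hm1 [Hm2 _]].
pose proof (INR_ge1 _ Hm1).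
replace ((2 * PI) ^ (n - 1)) with (INR 1 * (2 * PI) ^ (n - 1)) by (simpl; ring).
apply (fraction_boxes_measure_ge n Q mu0 c4 1 (fun _ _ => PI) PI); [lra| |intros; lia].
intros i Hi. split; [|intros; lra].
replace (fun _ : nat => PI) with (fun _ : nat => PI * IZR (Z.of_nat (nfloor Q)) / INR (nfloor Q)).
- apply fraction_point_of_ints; auto. intros; lia.
- apply functional_extensionality. intros. rewrite <- INR_IZR_INZ.
  field. lra.
Qed.

Lemma round_to_fraction_mid m x : (1 <= m)%nat -> 3 * PI / 4 <= x <= 5 * PI / 4 ->
  exists z : Z, (1 <= z <= 4 * Z.of_nat m)%Z /\ PI / 2 <= PI * IZR z / INR m <= 3 * PI / 2 /\
    Rabs (PI * IZR z / INR m - x) <= PI / (2 * INR m).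
Proof.
intros Hm Hx. pose proof PI_RGT_0. pose proof (INR_ge1 m Hm).
set (y := x * INR m / PI).
assert (Hy : 3 * INR m / 4 <= y <= 5 * INR m / 4).
{ unfold y. split; apply Rmult_le_reg_r with PI; auto;
  replace (x * INR m / PI * PI) with (x * INR m) by (field; lra); nra. }
exists (up (y - 1 / 2)). destruct (archimed (y - 1 / 2)) as [A1 A2].
set (z := up (y - 1 / 2)) in *.
(* the nearest integer to [y] lies in [m/2, 3m/2], also when [m = 1] *)
assert (Hz : INR m / 2 <= IZR z <= 3 * INR m / 2).
{ destruct (Nat.eq_dec m 1) as [->|Hm2].
  - simpl in *. assert (0 < z < 2)%Z by (split; apply lt_IZR; simpl; lra).
    replace z with 1%Z by lia. simpl. lra.
  - assert (2 <= INR m) by (change 2 with (INR 2); apply le_INR; lia). lra. }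
assert (Hzm : (1 <= z <= 4 * Z.of_nat m)%Z).
{ split; [assert (0 < z)%Z by (apply lt_IZR; simpl; lra); lia|].
  apply le_IZR. rewrite mult_IZR, <- INR_IZR_INZ. simpl. lra. }
split; [auto|]. split.
- split; apply Rmult_le_reg_r with (INR m); try lra;
    replace (PI * IZR z / INR m * INR m) with (PI * IZR z) by (field; lra); nra.
- replace (PI * IZR z / INR m - x) with (PI / INR m * (IZR z - y)) by (unfold y; field; lra).
  rewrite Rabs_mult, Rabs_pos_eq by (left; apply Rdiv_lt_0_compat; lra).
  assert (Rabs (IZR z - y) <= 1 / 2) by (apply Rabs_le; lra).
  apply Rle_trans with (PI / INR m * (1 / 2)); [apply Rmult_le_compat_l; auto|].
  + left; apply Rdiv_lt_0_compat; lra.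
  + right; field; lra.
Qed.

(* Regime of a grid of mesh about [rho = pi / (mu0 Q T)]: the fractions of denominator
   [floor Q] are then dense enough to round every grid point to one of them. *)
Section DenseRegime.

Variables (n : nat) (Q mu0 c4 : R).
Hypotheses (hQ : 1 <= Q) (hmu0 : 0 < mu0 <= / 144) (hc4 : 0 < c4 < 1)
  (hsmall : approx_radius n Q mu0 c4 <= PI) (hdense : mu0 * Qroot n Q <= 3).

Let T := Qroot n Q.
Let rho := PI / (mu0 * Q * T).
Let m := nfloor Q.
Let a := PI / INR m.
Let D := a + 2 * rho.
Let L := S (nfloor (PI / (2 * D))).

Lemma dense_regime_params : approx_radius n Q mu0 c4 = c4 * rho /\ 0 < rho /\ 0 < a /\
  D <= 3 * PI * rho /\ INR (L - 1) * D <= PI / 2 /\ PI / (2 * D) < INR L.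
Proof.
pose proof PI_RGT_0. pose proof (Qroot_ge1 n Q hQ) as HT. fold T in HT.
assert (HX : 0 < mu0 * Q * T) by (apply Rmult_lt_0_compat; [apply Rmult_lt_0_compat|]; lra).
assert (Hrho : 0 < rho) by (apply Rdiv_lt_0_compat; lra).
destruct (floor_Q_denominator Q mu0 hQ ltac:(lra)) as [Hm1 [Hm2 Hm3]]. fold m in Hm1, Hm2, Hm3.
pose proof (INR_ge1 _ Hm1).
assert (Ha : 0 < a) by (apply Rdiv_lt_0_compat; lra).
assert (HD : D <= 3 * PI * rho).
{ assert (a < 6 * rho).
  { unfold a, rho. apply Rmult_lt_reg_r with (INR m * (mu0 * Q * T)); [apply Rmult_lt_0_compat; lra|].
    replace (PI / INR m * (INR m * (mu0 * Q * T))) with (PI * (mu0 * Q * T))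
      by (field; repeat split; lra).
    replace (6 * (PI / (mu0 * Q * T)) * (INR m * (mu0 * Q * T))) with (6 * PI * INR m)
      by (field; repeat split; lra).
    assert (mu0 * T * Q <= 3 * Q) by (apply Rmult_le_compat_r; [lra | exact hdense]). nra. }
  pose proof PI2_3_2. unfold D. nra. }
destruct (nfloor_spec (PI / (2 * D))) as [HL1 HL2]; [left; apply Rdiv_lt_0_compat; unfold D; lra|].
split; [unfold approx_radius, rho; fold T; field; repeat split; lra|].
do 3 (split; [auto|]). split.
- replace (L - 1)%nat with (nfloor (PI / (2 * D))) by (unfold L; lia).
  apply Rle_trans with (PI / (2 * D) * D); [apply Rmult_le_compat_r; [unfold D|]; lra|].
  right; field. unfold D; lra.
- unfold L. rewrite S_INR. lra.
Qed.

Lemma dense_grid_fraction i : exists p, fraction_point n Q mu0 p /\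
  forall j, (2 <= j <= n)%nat ->
    c4 * rho / 2 <= p j <= 2 * PI - c4 * rho / 2 /\
    Rabs (p j - grid_point L (3 * PI / 4) D i j) <= a / 2.
Proof.
destruct dense_regime_params as [Er [Hrho [Ha [_ [HLD _]]]]].
destruct (floor_Q_denominator Q mu0 hQ ltac:(lra)) as [Hm1 [Hm2 _]]. fold m in Hm1, Hm2.
pose proof (INR_ge1 _ Hm1). pose proof PI_RGT_0.
assert (Hz : forall j, exists z : Z, (2 <= j <= n)%nat -> (1 <= z <= 4 * Z.of_nat m)%Z /\
  PI / 2 <= PI * IZR z / INR m <= 3 * PI / 2 /\
  Rabs (PI * IZR z / INR m - grid_point L (3 * PI / 4) D i j) <= PI / (2 * INR m)).
{ intro j. destruct (round_to_fraction_mid m (grid_point L (3 * PI / 4) D i j) Hm1)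
    as [z Hz]; [|exists z; auto].
  destruct (grid_point_bounds L (3 * PI / 4) D i j ltac:(unfold L; lia) ltac:(unfold D; lra)).
  lra. }
destruct (choice _ Hz) as [z Hzj].
exists (fun j => PI * IZR (z j) / INR m). split.
- apply fraction_point_of_ints; auto. intros j Hj. apply Hzj; auto.
- intros j Hj. destruct (Hzj j Hj) as [_ [Hp Hclose]]. split; [rewrite Er in hsmall; lra|].
  replace (a / 2) with (PI / (2 * INR m)) by (unfold a; field; lra). exact Hclose.
Qed.

Lemma measure_ge_dense_denominators :
  lebesgue_outer_measure_ge n (approx_set n Q mu0 c4) ((c4 / 6) ^ (n - 1) / 2).
Proof.
destruct dense_regime_params as [Er [Hrho [Ha [HD [_ HL]]]]]. pose proof PI_RGT_0.
apply outer_measure_ge_weaken with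
  (sumR (fun i => indic True) (L ^ (n - 1)) * (2 * (c4 * rho / 2)) ^ (n - 1)).
{ apply (grid_fractions_measure_ge n Q mu0 c4 L (3 * PI / 4) D (c4 * rho / 2) (a / 2));
    [unfold L; lia | rewrite Er; destruct hc4; split; nra | unfold D; lra
    | unfold D; destruct hc4; nra | intros i _ _; apply dense_grid_fraction]. }
rewrite (sumR_ext _ (fun _ => 1)) by (intros; apply indic_true; auto).
rewrite sumR_const, Rmult_1_r, pow_INR.
replace (2 * (c4 * rho / 2)) with (c4 * rho) by field.
pose proof (pow_le (INR L) (n - 1) (pos_INR L)).
apply (target_of_grid_count c4 (c4 * rho) (INR L ^ (n - 1)) L); [lra | destruct hc4; nra | | lra].
apply Rle_trans with (PI / (2 * D) * (c4 * rho)).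
- apply Rle_trans with (PI / (2 * (3 * PI * rho)) * (c4 * rho)); [right; field; lra|].
  apply Rmult_le_compat_r; [destruct hc4; nra|]. apply Rmult_le_compat_l; [lra|].
  apply Rinv_le_contravar; unfold D in *; nra.
- apply Rmult_le_compat_r; [destruct hc4; nra | lra].
Qed.

End DenseRegime.

(* Regime where fractions of denominator [floor Q] are too sparse: a grid of mesh [4 rho] is
   approximated by Dirichlet's theorem with [K = floor T], and the grid points whose
   Dirichlet denominator is below [mu0 Q] are counted by a union bound over the denominator. *)
Section DirichletRegime.

Variables (n : nat) (Q mu0 c4 : R).
Hypotheses (hn : (2 <= n)%nat) (hQ : 1 <= Q) (hmu0 : 0 < mu0) (hmu0' : mu0 <= / (4 * PI) ^ n)
  (hc4 : 0 < c4 < 1) (hlarge : 3 < mu0 * Qroot n Q).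

Let d := (n - 1)%nat.
Let T := Qroot n Q.
Let K := nfloor T.
Let u := mu0 * Q.
Let rho := PI / (u * T).
Let om := PI / (u * INR K).
Let D := 4 * rho.
Let L := S (nfloor (3 * PI / (2 * D))).

Lemma dirichlet_regime_params :
  100 <= INR K /\ T <= 101 / 100 * INR K /\ INR (K ^ d) <= Q /\ 1 <= u /\
  0 < rho < 1 / 100 /\ 0 < om <= 101 / 100 * rho.
Proof.
pose proof PI_RGT_0. pose proof PI_4.
pose proof (mu0_le_inv144 n mu0 hn hmu0').
pose proof (Qroot_ge1 n Q hQ) as HT1. pose proof (Qroot_pow n Q hn hQ) as HTd. fold T in HT1, HTd |- *.
assert (HT : 432 < T) by (apply Rmult_lt_reg_l with mu0; [auto | fold T in hlarge; lra]).
assert (HTQ : T <= Q) by (rewrite <- HTd; rewrite <- (pow_1 T) at 1; apply Rle_pow; unfold d; lia || lra).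
destruct (nfloor_spec T) as [HK1 HK2]; [lra|]. fold K in HK1, HK2.
assert (HK : 100 <= INR K) by lra.
assert (Hu : 3 * T < u * T) by (unfold u; fold T in hlarge; nra).
assert (Hrho : 0 < rho) by (apply Rdiv_lt_0_compat; nra).
assert (Hom : 0 < om) by (apply Rdiv_lt_0_compat; nra).
split; [lra|]. split; [lra|]. split.
{ rewrite pow_INR, <- HTd. apply pow_incr. lra. }
split; [nra|]. split; [split; [auto|]|split; [auto|]].
- unfold rho. apply Rmult_lt_reg_r with (u * T); [nra|].
  replace (PI / (u * T) * (u * T)) with PI by (field; nra). lra.
- unfold om, rho. apply Rmult_le_reg_r with (u * INR K * T); [nra|].
  replace (PI / (u * INR K) * (u * INR K * T)) with (PI * T) by (field; nra).
  replace (101 / 100 * (PI / (u * T)) * (u * INR K * T)) with (PI * (101 / 100 * INR K))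
    by (field; nra).
  apply Rmult_le_compat_l; lra.
Qed.

Lemma dirichlet_progression_range v : (v < L)%nat -> PI / 4 <= PI / 4 + INR v * D <= 7 * PI / 4.
Proof.
intros Hv. destruct dirichlet_regime_params as [_ [_ [_ [_ [[Hrho _] _]]]]].
pose proof PI_RGT_0. assert (HD : 0 < D) by (unfold D; lra).
destruct (nfloor_spec (3 * PI / (2 * D))) as [HL _]; [left; apply Rdiv_lt_0_compat; lra|].
assert (INR v <= INR (nfloor (3 * PI / (2 * D)))) by (apply le_INR; unfold L in Hv; lia).
assert (INR v * D <= 3 * PI / (2 * D) * D) by (apply Rmult_le_compat_r; lra).
replace (3 * PI / (2 * D) * D) with (3 * PI / 2) in * by (field; lra).
pose proof (pos_INR v). nra.
Qed.

Let grid i j := grid_point L (PI / 4) D i j.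

Lemma dirichlet_grid_range i j : PI / 4 <= grid i j <= 7 * PI / 4.
Proof. apply dirichlet_progression_range, digit_lt. unfold L; lia. Qed.

Definition dirichlet_good i := exists p, fraction_point n Q mu0 p /\
  forall j, (2 <= j <= n)%nat ->
    c4 * rho / 2 <= p j <= 2 * PI - c4 * rho / 2 /\ Rabs (p j - grid i j) <= om.

Definition near_fraction m v :=
  exists b : Z, Rabs (PI / 4 + INR v * D - PI * IZR b / INR m) < PI / (INR m * INR K).

Lemma not_good_small_denominator i : ~ dirichlet_good i ->
  exists m, (1 <= m)%nat /\ INR m < u /\ forall t, (t < d)%nat -> near_fraction m (digit L t i).
Proof.
intros Hbad. pose proof PI_RGT_0. pose proof PI2_3_2.
destruct dirichlet_regime_params as [HK [_ [HKd [Hu [[Hrho Hrho1] [Hom0 Hom]]]]]].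
destruct (dirichlet_simultaneous d K (fun t => grid i (t + 2) / PI)) as [m [Hm [b Hb]]].
{ apply INR_le. simpl. lra. }
pose proof (INR_ge1 m (proj1 Hm)).
assert (Hclose : forall t, (t < d)%nat ->
  Rabs (grid i (t + 2) - PI * IZR (b t) / INR m) < PI / (INR m * INR K)).
{ intros t Ht. specialize (Hb t Ht).
  replace (grid i (t + 2) - PI * IZR (b t) / INR m)
    with (PI / INR m * (INR m * (grid i (t + 2) / PI) - IZR (b t))) by (field; lra).
  rewrite Rabs_mult, (Rabs_pos_eq (PI / INR m)) by (left; apply Rdiv_lt_0_compat; lra).
  replace (PI / (INR m * INR K)) with (PI / INR m * / INR K) by (field; lra).
  apply Rmult_lt_compat_l; auto. apply Rdiv_lt_0_compat; lra. }
exists m. split; [lia|]. split.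
- apply Rnot_le_lt. intro Hmu. apply Hbad.
  apply (fraction_point_near n Q mu0 m (fun j => b (j - 2)%nat) (grid i) om (c4 * rho / 2));
    [lia | split; [auto|] | destruct hc4; nra |].
  { apply Rle_trans with (INR (K ^ d)); auto. apply le_INR. lia. }
  intros j Hj. pose proof (dirichlet_grid_range i j). specialize (Hclose (j - 2)%nat ltac:(unfold d; lia)).
  replace (j - 2 + 2)%nat with j in Hclose by lia.
  assert (c4 * rho <= rho) by (destruct hc4; nra). split; [split; lra|].
  apply Rlt_le, Rlt_le_trans with (PI / (INR m * INR K)); auto.
  unfold om. apply Rmult_le_compat_l; [lra|]. apply Rinv_le_contravar; [nra|].
  apply Rmult_le_compat_r; lra.
- intros t Ht. exists (b t). specialize (Hclose t Ht).
  unfold grid, grid_point in Hclose. replace (t + 2 - 2)%nat with t in Hclose by lia. exact Hclose.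
Qed.

(* With [L >= 3 u T / 8] the bound [(3 m / 2 + 2 / K + 1) (u T / (2 m K) + 1)] of
   [count_progression_near_fractions] is below [4 u <= 11 L / T]; the constant [11 <= 4 pi]
   is what the union bound in [dirichlet_bad_count] can afford. *)
Lemma near_fraction_count m : (1 <= m)%nat -> INR m <= u ->
  sumR (fun v => indic (near_fraction m v)) L <= 11 / T * INR L.
Proof.
intros Hm Hmu. pose proof PI_RGT_0. pose proof (INR_ge1 m Hm).
destruct dirichlet_regime_params as [HK [HTK [_ [Hu [[Hrho _] _]]]]].
assert (HT : 1 <= T) by (apply Qroot_ge1; auto).
assert (HD : 0 < D) by (unfold D; lra).
assert (Hr : rho * (u * T) = PI) by (unfold rho; field; split; lra).
set (w := PI / (INR m * INR K)). assert (Hw : 0 < w) by (apply Rdiv_lt_0_compat; nra).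
eapply Rle_trans.
{ apply (count_progression_near_fractions (PI / 4) D w (PI / 4) (7 * PI / 4) m L); auto; [lra|].
  apply dirichlet_progression_range. }
set (Y := 2 * w / D).
assert (E1 : INR m * (7 * PI / 4 - PI / 4 + 2 * w) / PI + 1 = 3 / 2 * INR m + 2 / INR K + 1)
  by (unfold w; field; lra).
assert (E2 : Y * (2 * INR m * INR K) = u * T).
{ unfold Y, w, D. apply Rmult_eq_reg_l with rho; [|lra]. rewrite Hr. field. lra. }
assert (HmY : INR m * Y <= 101 / 200 * u).
{ apply Rmult_le_reg_r with (2 * INR K); [lra|].
  replace (INR m * Y * (2 * INR K)) with (Y * (2 * INR m * INR K)) by ring. rewrite E2. nra. }
assert (HY : 0 <= Y) by (unfold Y; apply Rmult_le_pos; [lra | left; apply Rinv_0_lt_compat; lra]).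
assert (HK2 : 2 / INR K <= 2 / 100) by (apply Rmult_le_compat_l; [lra | apply Rinv_le_contravar; lra]).
assert (HL : 3 * u * T / 8 <= INR L).
{ destruct (nfloor_spec (3 * PI / (2 * D))) as [_ HL]; [left; apply Rdiv_lt_0_compat; lra|].
  unfold L. rewrite S_INR. replace (3 * u * T / 8) with (3 * PI / (2 * D)); [lra|].
  unfold D. apply Rmult_eq_reg_l with (8 * rho); [|lra].
  replace (8 * rho * (3 * u * T / 8)) with (3 * (rho * (u * T))) by field. rewrite Hr. field. lra. }
assert (H11 : 33 / 8 * u <= 11 / T * INR L).
{ apply Rle_trans with (11 / T * (3 * u * T / 8)); [right; field; lra|].
  apply Rmult_le_compat_l; [left; apply Rdiv_lt_0_compat; lra | exact HL]. }
rewrite E1. fold Y. nra.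
Qed.

Lemma not_good_le_union i : indic (~ dirichlet_good i) <=
  sumR (fun m' => prodR (fun t => indic (near_fraction (S m') (digit L t i))) 0 d) (nfloor u).
Proof.
destruct dirichlet_regime_params as [_ [_ [_ [Hu _]]]].
destruct (nfloor_spec u) as [HM1 HM2]; [lra|].
destruct (classic (dirichlet_good i)) as [Hg|Hg].
{ rewrite indic_false by tauto. apply sumR_nonneg. intros. apply prodR_nonneg.
  intros; apply indic_01. }
rewrite indic_true by auto.
destruct (not_good_small_denominator i Hg) as [m [Hm [Hmu Hnear]]].
assert (HmM : (m - 1 < nfloor u)%nat).
{ assert (Hlt : INR m < INR (nfloor u) + 1) by lra. rewrite <- S_INR in Hlt.
  apply INR_lt in Hlt. lia. }
apply Rle_trans with (prodR (fun t => indic (near_fraction (S (m - 1)) (digit L t i))) 0 d).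
- replace (S (m - 1)) with m by lia.
  rewrite (prodR_ext _ (fun _ => 1)), prodR_const, pow1; [lra|].
  intros t Ht. apply indic_true, Hnear. lia.
- apply (sumR_ge_term (fun m' => prodR (fun t => indic (near_fraction (S m') (digit L t i))) 0 d));
    auto.
  intros; apply prodR_nonneg; intros; apply indic_01.
Qed.

Lemma dirichlet_bad_count :
  sumR (fun i => indic (~ dirichlet_good i)) (L ^ d) <= INR (L ^ d) / 2.
Proof.
pose proof PI_RGT_0. destruct dirichlet_regime_params as [_ [_ [_ [Hu _]]]].
assert (HT : 1 <= T) by (apply Qroot_ge1; auto).
destruct (nfloor_spec u) as [HM1 HM2]; [lra|]. set (M := nfloor u) in *.
eapply Rle_trans; [apply sumR_le; intros i _; apply not_good_le_union|]. fold M.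
rewrite sumR_swap.
rewrite (sumR_ext _ (fun m' => (sumR (fun v => indic (near_fraction (S m') v)) L) ^ d)).
2:{ intros m' _. apply (sumR_prod_digits (fun v => indic (near_fraction (S m') v)) L d).
    unfold L; lia. }
apply Rle_trans with (sumR (fun _ => (11 / T * INR L) ^ d) M).
{ apply sumR_le. intros m' Hm'. apply pow_incr. split.
  - apply sumR_nonneg; intros; apply indic_01.
  - apply near_fraction_count; [lia|]. apply Rle_trans with (INR M); auto. apply le_INR; lia. }
rewrite sumR_const, Rpow_mult_distr, pow_INR.
assert (E11 : (11 / T) ^ d = 11 ^ d / Q).
{ unfold Rdiv. rewrite Rpow_mult_distr, pow_inv. unfold T, d. rewrite Qroot_pow; auto. }
rewrite E11.
assert (Hfac : INR M * (11 ^ d / Q) <= / 2).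
{ apply Rle_trans with (u * (11 ^ d / Q)).
  - apply Rmult_le_compat_r; auto. apply Rmult_le_pos; [apply pow_le; lra|].
    left; apply Rinv_0_lt_compat; lra.
  - replace (u * (11 ^ d / Q)) with (mu0 * 11 ^ d) by (unfold u; field; lra).
    apply Rle_trans with (/ (4 * PI)); [apply mu0_mul_pow11_le; auto; lia|].
    apply Rinv_le_contravar; pose proof PI2_3_2; lra. }
assert (0 <= INR L ^ d) by (apply pow_le, pos_INR). nra.
Qed.

Lemma measure_ge_dirichlet :
  lebesgue_outer_measure_ge n (approx_set n Q mu0 c4) ((c4 / 6) ^ (n - 1) / 2).
Proof.
pose proof PI_RGT_0. pose proof PI2_3_2.
destruct dirichlet_regime_params as [_ [_ [_ [Hu [[Hrho Hrho1] [Hom0 Hom]]]]]].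
assert (HT : 1 <= T) by (apply Qroot_ge1; auto).
assert (Er : approx_radius n Q mu0 c4 = c4 * rho)
  by (unfold approx_radius, rho, u; fold T; field; repeat split; lra).
assert (HD : 0 < D) by (unfold D; lra).
apply outer_measure_ge_weaken with
  (sumR (fun i => indic (dirichlet_good i)) (L ^ d) * (2 * (c4 * rho / 2)) ^ d).
- apply (grid_fractions_measure_ge n Q mu0 c4 L (PI / 4) D (c4 * rho / 2) om dirichlet_good);
    [unfold L; lia | rewrite Er; destruct hc4; split; nra | auto | unfold D; destruct hc4; nra |].
  intros i _ [p Hp]. exists p. exact Hp.
- replace (2 * (c4 * rho / 2)) with (c4 * rho) by field.
  apply (target_of_grid_count c4 (c4 * rho) _ L d); [lra | destruct hc4; nra | |].
  + destruct (nfloor_spec (3 * PI / (2 * D))) as [_ HL]; [left; apply Rdiv_lt_0_compat; lra|].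
    assert (HLr : 3 * PI / 8 <= INR L * rho).
    { apply Rle_trans with (3 * PI / (2 * D) * rho); [right; unfold D; field; lra|].
      apply Rmult_le_compat_r; [lra|]. unfold L. rewrite S_INR. lra. }
    destruct hc4. nra.
  + pose proof dirichlet_bad_count. rewrite <- pow_INR.
    assert (sumR (fun i => indic (dirichlet_good i)) (L ^ d)
            + sumR (fun i => indic (~ dirichlet_good i)) (L ^ d) = INR (L ^ d)).
    { rewrite <- sumR_plus, (sumR_ext _ (fun _ => 1)), sumR_const; [lra|].
      intros; apply indic_compl. }
    lra.
Qed.

End DirichletRegime.

Theorem mainTheorem9 (n : nat) (Q mu0 c4 : R)
  (hn : (2 <= n)%nat) (hQ : 1 <= Q)
  (hmu0 : 0 < mu0) (hmu0' : mu0 <= / (4 * PI) ^ n)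
  (hc4 : 0 < c4) (hc4' : c4 < 1) :
  lebesgue_outer_measure_ge n (approx_set n Q mu0 c4)
    (c4 ^ (n - 1) * (/ 3) ^ (n - 1) * (/ 2) ^ n).
Proof.
replace (c4 ^ (n - 1) * (/ 3) ^ (n - 1) * (/ 2) ^ n) with ((c4 / 6) ^ (n - 1) / 2).
2:{ replace ((/ 2) ^ n) with (/ 2 * (/ 2) ^ (n - 1)) by (rewrite tech_pow_Rmult; f_equal; lia).
    replace (c4 / 6) with (c4 * / 3 * / 2) by field. rewrite !Rpow_mult_distr. field. }
pose proof (mu0_le_inv144 n mu0 hn hmu0').
destruct (Rlt_or_le PI (approx_radius n Q mu0 c4)) as [Hlarge|Hsmall].
- apply outer_measure_ge_weaken with ((2 * PI) ^ (n - 1)).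
  + apply measure_ge_large_radius; auto.
  + pose proof PI_RGT_0.
    assert ((c4 / 6) ^ (n - 1) <= 1 ^ (n - 1)) by (apply pow_incr; lra).
    assert (1 ^ (n - 1) <= (2 * PI) ^ (n - 1)) by (apply pow_incr; pose proof PI2_3_2; lra).
    assert (0 <= (c4 / 6) ^ (n - 1)) by (apply pow_le; lra). lra.
- destruct (Rle_or_lt (mu0 * Qroot n Q) 3) as [Hdense|Hsparse].
  + apply measure_ge_dense_denominators; auto.
  + apply measure_ge_dirichlet; auto.
Qed.
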